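(* There exist constants $K$ and $M$ such that the following holds. Let $k\ge K$ be an integer and $a,b,b'\in(\frac1{10},10)$ with $b\le b'$. Let $u_1=\cos(ky)e^{-k\sqrt b\,t}$ and $u_2=\cos(ky)e^{-k\sqrt{b'}\,t}$, which solve respectively $\ddot u_1+\operatorname{div}\left[\begin{pmatrix}a&0\\0&b\end{pmatrix}\nabla u_1\right]=0$ and $\ddot u_2+\operatorname{div}\left[\begin{pmatrix}a&0\\0&b'\end{pmatrix}\nabla u_2\right]=0$. For every $t_1\ge0$ and $c_1>0$, with $c_2>0$ defined by $c_1e^{-k\sqrt b\,t_1}=c_2e^{-k\sqrt{b'}\,t_1}$, there exist a $C^2$ function $u$ and a $C^1$ real $2\times 2$ matrix function $A$ in the regularity class $R(80,10)$ with $\ddot u+\operatorname{div}(A\nabla u)=0$ on $\mathbb{T}^2\times\mathbb{R}$, such that $u=c_1u_1$, $A=\begin{pmatrix}a&0\\0&b\end{pmatrix}$ for $t\le t_1$, and $u=c_2u_2$, $A=\begin{pmatrix}a&0\\0&b'\end{pmatrix}$ for $t\ge t_1+400$. Moreover, for $t\in[t_1,t_1+400]$, $u=g(t)\cos(ky)$ with $g\in C^2$ and $|g^{(\alpha)}(t)|\le Mc_1k^\alpha e^{-k\sqrt b\,t}$ for $0\le\alpha\le2$.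
   Context: $\mathbb{T}^2=(\mathbb{R}/2\pi\mathbb{Z})^2$ with coordinates $(x,y)$; $t$ the third coordinate. $\ddot u+\operatorname{div}(A\nabla u)$ means $\partial_t^2u+\sum_{i,j\in\{x,y\}}\partial_i(A_{ij}\partial_ju)$. Regularity class $R(\Lambda,C)$: $\Lambda^{-1}|\xi|^2\le\xi^TA\xi\le\Lambda|\xi|^2$ for all $\xi\in\mathbb{R}^2$ at every point, and the entries of $A$ are $C^1$ with all first partial derivatives in $x,y,t$ bounded by $C$ in absolute value. *)

From Stdlib Require Import Reals Lra ZArith.
From Coquelicot Require Import Coquelicot.
Open Scope R_scope.

(* Functions on T^2 x R are represented as functions R -> R -> R -> R
   (arguments x y t) that are 2*PI-periodic in x and in y. *)
Definition fun3 := R -> R -> R -> R.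

Definition periodic_xy (f : fun3) : Prop :=
  forall x y t, f (x + 2 * PI) y t = f x y t /\ f x (y + 2 * PI) t = f x y t.

Definition dx (f : fun3) : fun3 := fun x y t => Derive (fun s => f s y t) x.
Definition dy (f : fun3) : fun3 := fun x y t => Derive (fun s => f x s t) y.
Definition dt (f : fun3) : fun3 := fun x y t => Derive (fun s => f x y s) t.

Definition cont3 (f : fun3) : Prop :=
  forall x y t eps, 0 < eps -> exists delta, 0 < delta /\
    forall x' y' t', Rabs (x' - x) < delta -> Rabs (y' - y) < delta ->
      Rabs (t' - t) < delta -> Rabs (f x' y' t' - f x y t) < eps.

Definition C1_3 (f : fun3) : Prop :=
  cont3 f /\
  (forall x y t,
     ex_derive (fun s => f s y t) x /\ ex_derive (fun s => f x s t) y /\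
     ex_derive (fun s => f x y s) t) /\
  cont3 (dx f) /\ cont3 (dy f) /\ cont3 (dt f).

Definition C2_3 (f : fun3) : Prop :=
  C1_3 f /\ C1_3 (dx f) /\ C1_3 (dy f) /\ C1_3 (dt f).

Definition C2_1 (g : R -> R) : Prop :=
  (forall t, ex_derive g t /\ ex_derive (Derive g) t) /\
  (forall t, continuity_pt (Derive_n g 2) t).

Record mat2field := Mat2 { A11 : fun3; A12 : fun3; A21 : fun3; A22 : fun3 }.

Definition wave_op (A : mat2field) (u : fun3) : fun3 := fun x y t =>
  dt (dt u) x y t
  + dx (fun x y t => A11 A x y t * dx u x y t + A12 A x y t * dy u x y t) x y t
  + dy (fun x y t => A21 A x y t * dx u x y t + A22 A x y t * dy u x y t) x y t.

Definition reg_class (Lam C : R) (A : mat2field) : Prop :=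
  (forall x y t xi1 xi2,
     let q := xi1 * (A11 A x y t * xi1 + A12 A x y t * xi2)
            + xi2 * (A21 A x y t * xi1 + A22 A x y t * xi2) in
     / Lam * (xi1 ^ 2 + xi2 ^ 2) <= q /\ q <= Lam * (xi1 ^ 2 + xi2 ^ 2)) /\
  (forall e, (e = A11 A \/ e = A12 A \/ e = A21 A \/ e = A22 A) ->
     C1_3 e /\ forall x y t,
       Rabs (dx e x y t) <= C /\ Rabs (dy e x y t) <= C /\ Rabs (dt e x y t) <= C).

Definition periodic_mat (A : mat2field) : Prop :=
  periodic_xy (A11 A) /\ periodic_xy (A12 A) /\
  periodic_xy (A21 A) /\ periodic_xy (A22 A).

Definition is_diag (A : mat2field) (x y t p q : R) : Prop :=
  A11 A x y t = p /\ A12 A x y t = 0 /\ A21 A x y t = 0 /\ A22 A x y t = q.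

From Stdlib Require Import Reals ZArith Lra Psatz FunctionalExtensionality.
From Coquelicot Require Import Coquelicot.
Open Scope R_scope.

(* Look for [u = g(t) cos(k y)] and [A = diag(a, beta(t))]: the equation becomes
   [g'' = k^2 beta g].  Taking [g = c1 exp(-k Phi)] forces [beta = Phi'^2 - Phi''/k],
   which lies in [[1/80, 80]] with [|beta'| <= 10] as soon as [k] is large, [Phi'] is
   bounded between [sqrt b] and a constant, and [Phi''], [Phi'''] are bounded.  The phase
   [Phi(t) = sqrt b t + (sqrt b' - sqrt b) P(t - t1)] does this, with [P] a [C^3] ramp
   that vanishes on [s <= 0] and is the identity on [s >= 400]; by the matching condition
   on [c1, c2] the amplitude then equals [c2 exp(-k sqrt b' t)] for [t >= t1 + 400]. *)

Lemma continuous_of_is_derive (f f' : R -> R) :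
  (forall x, is_derive f x (f' x)) -> forall x, continuous f x.
Proof.
  intros df x. apply (ex_derive_continuous (V := R_NormedModule)). exists (f' x). apply df.
Qed.

Lemma Derive_n_second (g g' g'' : R -> R) :
  (forall t, is_derive g t (g' t)) -> (forall t, is_derive g' t (g'' t)) ->
  forall t, Derive_n g 1 t = g' t /\ Derive_n g 2 t = g'' t.
Proof.
  intros dg dg' t. simpl. split; [apply is_derive_unique, dg|].
  rewrite (Derive_ext _ g' _ (fun s => is_derive_unique _ _ _ (dg s))).
  apply is_derive_unique, dg'.
Qed.

Lemma C2_1_intro (g g' g'' : R -> R) :
  (forall t, is_derive g t (g' t)) -> (forall t, is_derive g' t (g'' t)) ->
  (forall t, continuous g'' t) -> C2_1 g.
Proof.
  intros dg dg' cg''. split.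
  - intro t. split; [exists (g' t); apply dg|].
    apply (ex_derive_ext g'); [intro s; symmetry; apply is_derive_unique, dg|].
    exists (g'' t). apply dg'.
  - intro t. apply (continuity_pt_ext g'').
    + intro s. symmetry. apply (Derive_n_second g g' g''); assumption.
    + apply continuity_pt_filterlim, cg''.
Qed.

Definition sep (G H : R -> R) : fun3 := fun _ y t => G t * H y.

Lemma cont3_sep (G H : R -> R) :
  (forall t, continuous G t) -> (forall y, continuous H y) -> cont3 (sep G H).
Proof.
  intros cG cH x y t eps Heps.
  assert (cGH : continuous (fun p : R * R => G (fst p) * H (snd p)) (t, y)).
  { apply (continuous_mult (fun p : R * R => G (fst p)) (fun p : R * R => H (snd p))).
    - apply (continuous_comp fst G); [apply continuous_fst | apply cG].
    - apply (continuous_comp snd H); [apply continuous_snd | apply cH]. }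
  destruct (proj1 (filterlim_locally _ _) cGH (mkposreal eps Heps)) as [[d Hd] Hball].
  exists d; split; [exact Hd|].
  intros x' y' t' _ Hy Ht. exact (Hball (t', y') (conj Ht Hy)).
Qed.

Lemma dx_sep (G H : R -> R) : dx (sep G H) = sep (fun _ => 0) H.
Proof.
  unfold dx, sep. extensionality x; extensionality y; extensionality t.
  rewrite Derive_const. ring.
Qed.

Lemma dy_sep (G H H' : R -> R) :
  (forall y, is_derive H y (H' y)) -> dy (sep G H) = sep G H'.
Proof.
  intros dH. unfold dy, sep. extensionality x; extensionality y; extensionality t.
  apply is_derive_unique, is_derive_scal, dH.
Qed.

Lemma dt_sep (G G' H : R -> R) :
  (forall t, is_derive G t (G' t)) -> dt (sep G H) = sep G' H.
Proof.
  intros dG. unfold dt, sep. extensionality x; extensionality y; extensionality t.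
  apply is_derive_unique, (is_derive_scal_l (V := R_NormedModule)), dG.
Qed.

Lemma C1_3_sep (G G' H H' : R -> R) :
  (forall t, is_derive G t (G' t)) -> (forall y, is_derive H y (H' y)) ->
  (forall t, continuous G' t) -> (forall y, continuous H' y) ->
  C1_3 (sep G H).
Proof.
  intros dG dH cG' cH'.
  pose proof (continuous_of_is_derive _ _ dG) as cG.
  pose proof (continuous_of_is_derive _ _ dH) as cH.
  split; [apply cont3_sep; assumption|]. split.
  - intros x y t. unfold sep. split; [apply ex_derive_const|split].
    + exists (G t * H' y). apply is_derive_scal, dH.
    + exists (G' t * H y). apply (is_derive_scal_l (V := R_NormedModule)), dG.
  - rewrite dx_sep, (dy_sep G H H' dH), (dt_sep G G' H dG).
    repeat split; apply cont3_sep; auto. intro; apply continuous_const.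
Qed.

Lemma C2_3_sep (G G' G'' H H' H'' : R -> R) :
  (forall t, is_derive G t (G' t)) -> (forall t, is_derive G' t (G'' t)) ->
  (forall y, is_derive H y (H' y)) -> (forall y, is_derive H' y (H'' y)) ->
  (forall t, continuous G'' t) -> (forall y, continuous H'' y) ->
  C2_3 (sep G H).
Proof.
  intros dG dG' dH dH' cG'' cH''.
  pose proof (continuous_of_is_derive _ _ dG') as cG'.
  pose proof (continuous_of_is_derive _ _ dH') as cH'.
  assert (d0 : forall t : R, is_derive (fun _ : R => 0) t 0)
    by (intro; apply (is_derive_const (V := R_NormedModule))).
  split; [apply (C1_3_sep G G' H H'); assumption|].
  rewrite dx_sep, (dy_sep G H H' dH), (dt_sep G G' H dG).
  split; [|split].
  - apply (C1_3_sep _ (fun _ => 0) H H'); auto. intro; apply continuous_const.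
  - apply (C1_3_sep G G' H' H''); assumption.
  - apply (C1_3_sep G' G'' H H'); assumption.
Qed.

Definition diag_field (alpha beta : R -> R) : mat2field :=
  Mat2 (sep alpha (fun _ => 1)) (sep (fun _ => 0) (fun _ => 1))
       (sep (fun _ => 0) (fun _ => 1)) (sep beta (fun _ => 1)).

Lemma time_coef_C1_bounded (B B' : R -> R) (C : R) :
  (forall t, is_derive B t (B' t)) -> (forall t, continuous B' t) ->
  (forall t, Rabs (B' t) <= C) ->
  C1_3 (sep B (fun _ => 1)) /\ forall x y t,
    Rabs (dx (sep B (fun _ => 1)) x y t) <= C /\
    Rabs (dy (sep B (fun _ => 1)) x y t) <= C /\
    Rabs (dt (sep B (fun _ => 1)) x y t) <= C.
Proof.
  intros dB cB' bB'.
  assert (d1 : forall y : R, is_derive (fun _ : R => 1) y 0)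
    by (intro; apply (is_derive_const (V := R_NormedModule))).
  split.
  - apply (C1_3_sep B B' _ (fun _ => 0)); auto. intro; apply continuous_const.
  - intros x y t. rewrite dx_sep, (dy_sep B _ (fun _ => 0) d1), (dt_sep B B' _ dB).
    unfold sep. rewrite Rmult_0_l, Rmult_0_r, Rmult_1_r, Rabs_R0.
    pose proof (Rabs_pos (B' 0)); pose proof (bB' 0).
    repeat split; auto; lra.
Qed.

Lemma reg_class_diag_field (Lam C : R) (alpha alpha' beta beta' : R -> R) :
  (forall t, is_derive alpha t (alpha' t)) -> (forall t, is_derive beta t (beta' t)) ->
  (forall t, continuous alpha' t) -> (forall t, continuous beta' t) ->
  (forall t, / Lam <= alpha t <= Lam) -> (forall t, / Lam <= beta t <= Lam) ->
  (forall t, Rabs (alpha' t) <= C) -> (forall t, Rabs (beta' t) <= C) ->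
  reg_class Lam C (diag_field alpha beta).
Proof.
  intros dal dbe cal cbe bal bbe bal' bbe'. split.
  - intros x y t xi1 xi2. cbn [A11 A12 A21 A22 diag_field]. unfold sep.
    specialize (bal t). specialize (bbe t).
    pose proof (pow2_ge_0 xi1). pose proof (pow2_ge_0 xi2). split; nra.
  - assert (d0 : forall t : R, is_derive (fun _ : R => 0) t 0)
      by (intro; apply (is_derive_const (V := R_NormedModule))).
    assert (b0 : forall t : R, Rabs 0 <= C).
    { intro. rewrite Rabs_R0. eapply Rle_trans; [apply Rabs_pos | apply (bal' 0)]. }
    intros e [-> | [-> | [-> | ->]]]; cbn [A11 A12 A21 A22 diag_field].
    + apply (time_coef_C1_bounded alpha alpha'); assumption.
    + apply (time_coef_C1_bounded _ (fun _ => 0)); auto. intro; apply continuous_const.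
    + apply (time_coef_C1_bounded _ (fun _ => 0)); auto. intro; apply continuous_const.
    + apply (time_coef_C1_bounded beta beta'); assumption.
Qed.

Lemma is_derive_cos_mult (k y : R) :
  is_derive (fun y : R => cos (k * y)) y (- k * sin (k * y)).
Proof. auto_derive; [exact I | ring]. Qed.

Lemma is_derive_opp_sin_mult (k y : R) :
  is_derive (fun y : R => - k * sin (k * y)) y (- k ^ 2 * cos (k * y)).
Proof. auto_derive; [exact I | ring]. Qed.

Lemma periodic_xy_sep (G H : R -> R) :
  (forall y, H (y + 2 * PI) = H y) -> periodic_xy (sep G H).
Proof. intros HH x y t. unfold sep. rewrite HH. split; reflexivity. Qed.

Lemma cos_mult_periodic (k : Z) (y : R) :
  (0 <= k)%Z -> cos (IZR k * (y + 2 * PI)) = cos (IZR k * y).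
Proof.
  intros Hk. rewrite <- (Z2Nat.id k Hk), <- INR_IZR_INZ.
  replace (INR (Z.to_nat k) * (y + 2 * PI))
    with (INR (Z.to_nat k) * y + 2 * INR (Z.to_nat k) * PI) by ring.
  apply cos_period.
Qed.

Lemma wave_op_diag_field_sep (k : R) (alpha beta g g' g'' : R -> R) :
  (forall t, is_derive g t (g' t)) -> (forall t, is_derive g' t (g'' t)) ->
  (forall t, g'' t = k ^ 2 * beta t * g t) ->
  forall x y t, wave_op (diag_field alpha beta) (sep g (fun y => cos (k * y))) x y t = 0.
Proof.
  intros dg dg' Hg x y t. unfold wave_op.
  rewrite (dt_sep g g' _ dg), (dt_sep g' g'' _ dg'), dx_sep,
    (dy_sep g _ _ (is_derive_cos_mult k)).
  cbn [A11 A12 A21 A22 diag_field]. unfold dx, dy, sep. rewrite Derive_const.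
  rewrite (is_derive_unique _ _ (beta t * (g t * (- k ^ 2 * cos (k * y))))).
  - rewrite Hg. ring.
  - apply (is_derive_ext (fun s => beta t * (g t * (- k * sin (k * s))))).
    + intro s. simpl. ring.
    + apply is_derive_scal, is_derive_scal, is_derive_opp_sin_mult.
Qed.

Lemma periodic_mat_diag_field (alpha beta : R -> R) : periodic_mat (diag_field alpha beta).
Proof. repeat split; apply periodic_xy_sep; reflexivity. Qed.

Section ExpPhase.

Variables (k c : R) (Phi Phi1 Phi2 Phi3 : R -> R).
Hypothesis dPhi : forall t, is_derive Phi t (Phi1 t).
Hypothesis dPhi1 : forall t, is_derive Phi1 t (Phi2 t).
Hypothesis dPhi2 : forall t, is_derive Phi2 t (Phi3 t).
Hypothesis cPhi3 : forall t, continuous Phi3 t.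
Hypothesis k_neq0 : k <> 0.

Definition amp (t : R) : R := c * exp (- k * Phi t).
Definition amp1 (t : R) : R := - k * Phi1 t * amp t.
Definition amp2 (t : R) : R := (k ^ 2 * Phi1 t ^ 2 - k * Phi2 t) * amp t.

Definition wave_coef (t : R) : R := Phi1 t ^ 2 - Phi2 t / k.
Definition wave_coef1 (t : R) : R := 2 * Phi1 t * Phi2 t - Phi3 t / k.

Let ex_Phi t : ex_derive Phi t := ex_intro _ _ (dPhi t).
Let ex_Phi1 t : ex_derive Phi1 t := ex_intro _ _ (dPhi1 t).
Let ex_Phi2 t : ex_derive Phi2 t := ex_intro _ _ (dPhi2 t).
Let D_Phi t : Derive Phi t = Phi1 t := is_derive_unique _ _ _ (dPhi t).
Let D_Phi1 t : Derive Phi1 t = Phi2 t := is_derive_unique _ _ _ (dPhi1 t).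
Let D_Phi2 t : Derive Phi2 t = Phi3 t := is_derive_unique _ _ _ (dPhi2 t).

Lemma is_derive_amp t : is_derive amp t (amp1 t).
Proof.
  unfold amp1, amp. auto_derive; [apply ex_Phi|]. rewrite D_Phi. ring.
Qed.

Lemma is_derive_amp1 t : is_derive amp1 t (amp2 t).
Proof.
  unfold amp2, amp1, amp. auto_derive; [auto|]. rewrite D_Phi, D_Phi1. ring.
Qed.

Lemma continuous_amp2 t : continuous amp2 t.
Proof.
  apply (ex_derive_continuous (V := R_NormedModule)).
  unfold amp2, amp. auto_derive. auto.
Qed.

Lemma amp2_eq t : amp2 t = k ^ 2 * wave_coef t * amp t.
Proof. unfold amp2, wave_coef. field. exact k_neq0. Qed.

Lemma is_derive_wave_coef t : is_derive wave_coef t (wave_coef1 t).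
Proof.
  unfold wave_coef, wave_coef1. auto_derive; [auto|].
  rewrite D_Phi1, D_Phi2. field. exact k_neq0.
Qed.

Lemma continuous_wave_coef1 t : continuous wave_coef1 t.
Proof.
  unfold wave_coef1.
  apply (continuous_minus (V := R_NormedModule)
    (fun t => 2 * Phi1 t * Phi2 t) (fun t => Phi3 t / k)).
  - apply (ex_derive_continuous (V := R_NormedModule)). auto_derive. auto.
  - apply (continuous_mult Phi3 (fun _ => / k)); [apply cPhi3 | apply continuous_const].
Qed.

End ExpPhase.

Lemma extension_C0_range (f : R -> R) (a b : R) (Pr : R -> Prop) :
  a <= b -> (forall x, a <= x <= b -> Pr (f x)) -> forall x, Pr (extension_C0 f a b x).
Proof.
  intros Hab Hf x. unfold extension_C0.
  destruct Rbar_le_dec as [Hax|Hax]; [destruct Rbar_le_dec as [Hxb|Hxb]|];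
    simpl in *; apply Hf; lra.
Qed.

Lemma extension_C0_left (f : R -> R) (a b x : R) :
  a <= b -> x <= a -> extension_C0 f a b x = f a.
Proof.
  intros Hab Hxa. unfold extension_C0.
  destruct Rbar_le_dec as [Hax|]; [destruct Rbar_le_dec|]; simpl in *; try lra.
  f_equal. lra.
Qed.

Lemma extension_C0_right (f : R -> R) (a b x : R) :
  a <= b -> b <= x -> extension_C0 f a b x = f b.
Proof.
  intros Hab Hbx. unfold extension_C0.
  destruct Rbar_le_dec as [Hax|]; [destruct Rbar_le_dec|]; simpl in *; try lra.
  f_equal. lra.
Qed.

Lemma extension_C1_left (f df : R -> R) (a b x : R) :
  a <= b -> x <= a -> extension_C1 f df a b x = f a + (x - a) * df a.
Proof.
  intros Hab Hxa. unfold extension_C1.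
  destruct Rbar_le_dec as [Hax|]; [destruct Rbar_le_dec|]; simpl in *; try lra;
    [replace x with a by lra; ring | reflexivity].
Qed.

Lemma extension_C1_right (f df : R -> R) (a b x : R) :
  a <= b -> b <= x -> extension_C1 f df a b x = f b + (x - b) * df b.
Proof.
  intros Hab Hbx. unfold extension_C1.
  destruct Rbar_le_dec as [Hax|]; [destruct Rbar_le_dec|]; simpl in *; try lra;
    [replace x with b by lra; ring | reflexivity].
Qed.

(* A [C^0] extension by constants is differentiable when the derivative vanishes at
   both ends, since it then coincides with the [C^1] extension by affine maps. *)
Lemma is_derive_extension_C0 (f df : R -> R) (a b : R) :
  a <= b -> (forall x, is_derive f x (df x)) -> df a = 0 -> df b = 0 ->
  forall x, is_derive (extension_C0 f a b) x (extension_C0 df a b x).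
Proof.
  intros Hab df_f Ha Hb x.
  apply (is_derive_ext (extension_C1 f df a b)).
  - intro t. unfold extension_C1, extension_C0.
    destruct Rbar_le_dec; [destruct Rbar_le_dec|]; simpl;
      rewrite ?Ha, ?Hb; try reflexivity; unfold plus, scal; simpl; unfold mult; simpl; ring.
  - apply extension_C1_is_derive; [simpl; exact Hab | intros; apply df_f].
Qed.

(* [step] is a polynomial transition from 0 to 1 on [0, 1] whose first two
   derivatives vanish at both ends and whose mean is 1, so the ramp below is [C^3]
   and returns to the identity beyond 400. *)
Definition step_int (s : R) : R := 20 * s ^ 4 - 45 * s ^ 5 + 36 * s ^ 6 - 10 * s ^ 7.
Definition step (s : R) : R := 80 * s ^ 3 - 225 * s ^ 4 + 216 * s ^ 5 - 70 * s ^ 6.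
Definition step1 (s : R) : R := 240 * s ^ 2 - 900 * s ^ 3 + 1080 * s ^ 4 - 420 * s ^ 5.
Definition step2 (s : R) : R := 480 * s - 2700 * s ^ 2 + 4320 * s ^ 3 - 2100 * s ^ 4.

Lemma step_int_ge0 s : 0 <= s <= 1 -> 0 <= step_int s.
Proof.
  intros Hs. unfold step_int.
  replace (20 * s ^ 4 - 45 * s ^ 5 + 36 * s ^ 6 - 10 * s ^ 7)
    with (s ^ 4 * (1 + 3 * (1 - s) + 6 * (1 - s) ^ 2 + 10 * (1 - s) ^ 3)) by ring.
  assert (0 <= s ^ 4) by (apply pow_le; lra).
  assert (0 <= (1 - s) ^ 3) by (apply pow_le; lra). nra.
Qed.

Lemma step_bounds s : 0 <= s <= 1 -> 0 <= step s <= 21 / 10.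
Proof.
  intros Hs. unfold step.
  replace (80 * s ^ 3 - 225 * s ^ 4 + 216 * s ^ 5 - 70 * s ^ 6)
    with (s ^ 3 * (10 - 15 * s + 6 * s ^ 2) + 70 * (s * (1 - s)) ^ 3) by ring.
  assert (Hsmooth : 0 <= s ^ 3 * (10 - 15 * s + 6 * s ^ 2) <= 1).
  { assert (0 <= s ^ 3) by (apply pow_le; lra).
    assert (0 <= (1 - s) ^ 3) by (apply pow_le; lra).
    assert (1 - s ^ 3 * (10 - 15 * s + 6 * s ^ 2) = (1 - s) ^ 3 * (1 + 3 * s + 6 * s ^ 2))
      by ring.
    split; nra. }
  assert (0 <= s * (1 - s) <= 1 / 4) by (pose proof (pow2_ge_0 (s - 1 / 2)); split; nra).
  assert (0 <= (s * (1 - s)) ^ 3 <= (1 / 4) ^ 3)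
    by (split; [apply pow_le | apply pow_incr]; lra).
  simpl in *. lra.
Qed.

Lemma step1_bound s : 0 <= s <= 1 -> Rabs (step1 s) <= 40.
Proof.
  intros Hs. unfold step1.
  replace (240 * s ^ 2 - 900 * s ^ 3 + 1080 * s ^ 4 - 420 * s ^ 5)
    with ((s * (1 - s)) ^ 2 * (30 + 210 * (1 - 2 * s))) by ring.
  assert (0 <= s * (1 - s) <= 1 / 4) by (pose proof (pow2_ge_0 (s - 1 / 2)); split; nra).
  assert (0 <= (s * (1 - s)) ^ 2 <= 1 / 16) by (split; nra).
  apply Rabs_le. split; nra.
Qed.

Lemma step2_bound s : 0 <= s <= 1 -> Rabs (step2 s) <= 16000.
Proof.
  intros Hs. unfold step2.
  assert (0 <= s ^ 2 <= 1) by nra. assert (0 <= s ^ 3 <= 1) by nra.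
  assert (0 <= s ^ 4 <= 1) by nra. apply Rabs_le. split; nra.
Qed.

Definition ramp_poly (t : R) : R := 400 * step_int (t / 400).
Definition ramp_poly1 (t : R) : R := step (t / 400).
Definition ramp_poly2 (t : R) : R := step1 (t / 400) / 400.
Definition ramp_poly3 (t : R) : R := step2 (t / 400) / 160000.

Definition ramp : R -> R := extension_C1 ramp_poly ramp_poly1 0 400.
Definition ramp1 : R -> R := extension_C0 ramp_poly1 0 400.
Definition ramp2 : R -> R := extension_C0 ramp_poly2 0 400.
Definition ramp3 : R -> R := extension_C0 ramp_poly3 0 400.

Lemma is_derive_ramp s : is_derive ramp s (ramp1 s).
Proof.
  apply extension_C1_is_derive; [simpl; lra|]. intros x _ _.
  unfold ramp_poly, ramp_poly1, step_int, step. auto_derive; [exact I | field].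
Qed.

Lemma is_derive_ramp1 s : is_derive ramp1 s (ramp2 s).
Proof.
  apply is_derive_extension_C0; [lra | | unfold ramp_poly2, step1; field ..].
  intro x. unfold ramp_poly1, ramp_poly2, step, step1. auto_derive; [exact I | field].
Qed.

Lemma is_derive_ramp2 s : is_derive ramp2 s (ramp3 s).
Proof.
  apply is_derive_extension_C0; [lra | | unfold ramp_poly3, step2; field ..].
  intro x. unfold ramp_poly2, ramp_poly3, step1, step2. auto_derive; [exact I | field].
Qed.

Lemma continuous_ramp3 s : continuous ramp3 s.
Proof.
  apply (extension_C0_continuous (V := R_NormedModule)); [simpl; lra|]. intros x _ _.
  apply (ex_derive_continuous (V := R_NormedModule)).
  unfold ramp_poly3, step2. auto_derive. exact I.
Qed.

Lemma ramp_poly_ends :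
  ramp_poly 0 = 0 /\ ramp_poly1 0 = 0 /\ ramp_poly2 0 = 0 /\
  ramp_poly 400 = 400 /\ ramp_poly1 400 = 1 /\ ramp_poly2 400 = 0.
Proof.
  unfold ramp_poly, ramp_poly1, ramp_poly2, step_int, step, step1.
  repeat split; field.
Qed.

Lemma ramp_left s : s <= 0 -> ramp s = 0 /\ ramp1 s = 0 /\ ramp2 s = 0.
Proof.
  intros Hs. destruct ramp_poly_ends as (E0 & E1 & E2 & _).
  unfold ramp, ramp1, ramp2.
  rewrite extension_C1_left, !extension_C0_left, E0, E1, E2 by lra.
  repeat split; ring.
Qed.

Lemma ramp_right s : 400 <= s -> ramp s = s /\ ramp1 s = 1 /\ ramp2 s = 0.
Proof.
  intros Hs. destruct ramp_poly_ends as (_ & _ & _ & E0 & E1 & E2).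
  unfold ramp, ramp1, ramp2.
  rewrite extension_C1_right, !extension_C0_right, E0, E1, E2 by lra.
  repeat split; ring.
Qed.

Lemma ramp_ge0 s : 0 <= ramp s.
Proof.
  destruct (Rle_dec s 0) as [H0|H0]; [rewrite (proj1 (ramp_left s H0)); lra|].
  destruct (Rle_dec 400 s) as [H1|H1]; [rewrite (proj1 (ramp_right s H1)); lra|].
  unfold ramp. rewrite extension_C1_ext by (simpl; lra).
  unfold ramp_poly. apply Rmult_le_pos; [lra | apply step_int_ge0].
  split; unfold Rdiv; nra.
Qed.

Lemma ramp_derivative_bounds s :
  0 <= ramp1 s <= 21 / 10 /\ Rabs (ramp2 s) <= / 10 /\ Rabs (ramp3 s) <= / 10.
Proof.
  assert (Hunit : forall x, 0 <= x <= 400 -> 0 <= x / 400 <= 1)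
    by (intros; split; unfold Rdiv; nra).
  unfold ramp1, ramp2, ramp3, ramp_poly1, ramp_poly2, ramp_poly3. split; [|split].
  - apply (extension_C0_range _ _ _ (fun v => 0 <= v <= 21 / 10)); [lra|].
    intros x Hx. apply step_bounds, Hunit, Hx.
  - apply (extension_C0_range _ _ _ (fun v => Rabs v <= / 10)); [lra|].
    intros x Hx. pose proof (step1_bound _ (Hunit x Hx)) as H.
    apply Rabs_le_between in H. apply Rabs_le. lra.
  - apply (extension_C0_range _ _ _ (fun v => Rabs v <= / 10)); [lra|].
    intros x Hx. pose proof (step2_bound _ (Hunit x Hx)) as H.
    apply Rabs_le_between in H. apply Rabs_le. lra.
Qed.



Lemma sqrt_range (b : R) :
  / 10 < b < 10 -> 0 < sqrt b /\ sqrt b * sqrt b = b /\ sqrt b < 16 / 5.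
Proof.
  intros Hb. assert (0 < sqrt b) by (apply sqrt_lt_R0; lra).
  assert (sqrt b * sqrt b = b) by (apply sqrt_sqrt; lra).
  repeat split; nra.
Qed.

Section Transition.

Variables b b' t1 : R.
Hypothesis Hb : / 10 < b < 10.
Hypothesis Hb' : / 10 < b' < 10.
Hypothesis Hbb' : b <= b'.

Definition phase (t : R) : R := sqrt b * t + (sqrt b' - sqrt b) * ramp (t - t1).
Definition phase1 (t : R) : R := sqrt b + (sqrt b' - sqrt b) * ramp1 (t - t1).
Definition phase2 (t : R) : R := (sqrt b' - sqrt b) * ramp2 (t - t1).
Definition phase3 (t : R) : R := (sqrt b' - sqrt b) * ramp3 (t - t1).

Lemma is_derive_phase (t : R) : is_derive phase t (phase1 t).
Proof.
  unfold phase, phase1. auto_derive; [eexists; apply is_derive_ramp|].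
  replace (Derive _ _) with (ramp1 (t - t1))
    by (symmetry; apply is_derive_unique, is_derive_ramp).
  ring.
Qed.

Lemma is_derive_phase1 (t : R) : is_derive phase1 t (phase2 t).
Proof.
  unfold phase1, phase2. auto_derive; [eexists; apply is_derive_ramp1|].
  replace (Derive _ _) with (ramp2 (t - t1))
    by (symmetry; apply is_derive_unique, is_derive_ramp1).
  ring.
Qed.

Lemma is_derive_phase2 (t : R) : is_derive phase2 t (phase3 t).
Proof.
  unfold phase2, phase3. auto_derive; [eexists; apply is_derive_ramp2|].
  replace (Derive _ _) with (ramp3 (t - t1))
    by (symmetry; apply is_derive_unique, is_derive_ramp2).
  ring.
Qed.

Lemma continuous_phase3 (t : R) : continuous phase3 t.
Proof.
  apply (continuous_mult (fun _ => sqrt b' - sqrt b) (fun t => ramp3 (t - t1)));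
    [apply continuous_const|].
  apply (continuous_comp (fun t => t - t1) ramp3); [|apply continuous_ramp3].
  apply (ex_derive_continuous (V := R_NormedModule)). auto_derive. exact I.
Qed.

Let sqrt_gap : 0 <= sqrt b' - sqrt b <= 16 / 5.
Proof.
  pose proof (sqrt_range b Hb). pose proof (sqrt_range b' Hb').
  pose proof (sqrt_le_1_alt b b' Hbb'). lra.
Qed.

Lemma phase_ge_linear t : sqrt b * t <= phase t.
Proof. unfold phase. pose proof (ramp_ge0 (t - t1)). nra. Qed.

Lemma phase_derivative_bounds t :
  sqrt b <= phase1 t <= 7 /\ Rabs (phase2 t) <= / 2 /\ Rabs (phase3 t) <= / 2.
Proof.
  destruct (ramp_derivative_bounds (t - t1)) as (B1 & B2 & B3).
  pose proof (sqrt_range b' Hb').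
  unfold phase1, phase2, phase3.
  rewrite !Rabs_mult, (Rabs_right (sqrt b' - sqrt b)) by lra.
  pose proof (Rabs_pos (ramp2 (t - t1))). pose proof (Rabs_pos (ramp3 (t - t1))).
  repeat split; nra.
Qed.

Lemma phase_left t :
  t <= t1 -> phase t = sqrt b * t /\ phase1 t = sqrt b /\ phase2 t = 0.
Proof.
  intros Ht. destruct (ramp_left (t - t1)) as (E0 & E1 & E2); [lra|].
  unfold phase, phase1, phase2. rewrite E0, E1, E2. repeat split; ring.
Qed.

Lemma phase_right t :
  t1 + 400 <= t ->
  phase t = sqrt b' * t - (sqrt b' - sqrt b) * t1 /\ phase1 t = sqrt b' /\ phase2 t = 0.
Proof.
  intros Ht. destruct (ramp_right (t - t1)) as (E0 & E1 & E2); [lra|].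
  unfold phase, phase1, phase2. rewrite E0, E1, E2. repeat split; ring.
Qed.

Variable k : R.
Hypothesis Hk : 100 <= k.

Lemma wave_coef_bounds t :
  / 80 <= wave_coef k phase1 phase2 t <= 80 /\
  Rabs (wave_coef1 k phase1 phase2 phase3 t) <= 10.
Proof.
  destruct (phase_derivative_bounds t) as ([B1 B1'] & B2 & B3).
  destruct (sqrt_range b Hb) as (S0 & S1 & S2).
  apply Rabs_le_between in B2. apply Rabs_le_between in B3.
  assert (Hk' : 0 < / k <= / 100)
    by (split; [apply Rinv_0_lt_compat | apply Rinv_le_contravar]; lra).
  unfold wave_coef, wave_coef1, Rdiv. split; [split|]; [nra | nra |].
  apply Rabs_le. split; nra.
Qed.

Lemma amp_bounds c t : 0 < c ->
  Rabs (amp k c phase t) <= c * exp (- k * sqrt b * t) /\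
  Rabs (amp1 k c phase phase1 t) <= 7 * k * (c * exp (- k * sqrt b * t)) /\
  Rabs (amp2 k c phase phase1 phase2 t) <= 50 * k ^ 2 * (c * exp (- k * sqrt b * t)).
Proof.
  intros Hc. set (E := c * exp (- k * sqrt b * t)).
  assert (Hamp : 0 < amp k c phase t <= E).
  { unfold amp, E. split; [apply Rmult_lt_0_compat; [lra | apply exp_pos]|].
    apply Rmult_le_compat_l; [lra|].
    assert (Hle : - k * phase t <= - k * sqrt b * t) by (pose proof (phase_ge_linear t); nra).
    destruct (Rle_lt_or_eq_dec _ _ Hle) as [Hlt | ->];
      [left; apply exp_increasing, Hlt | lra]. }
  destruct (phase_derivative_bounds t) as ([B1 B1'] & B2 & _).
  pose proof (sqrt_range b Hb).
  unfold amp1, amp2. rewrite !Rabs_mult, !(Rabs_right (amp k c phase t)) by lra.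
  set (A := amp k c phase t) in *.
  assert (Hq : Rabs (k ^ 2 * phase1 t ^ 2 - k * phase2 t) <= 50 * k ^ 2).
  { assert (0 <= phase1 t ^ 2 <= 49) by (simpl; split; nra).
    assert (Hkp : Rabs (k * phase2 t) <= k / 2).
    { rewrite Rabs_mult, Rabs_right by lra. apply (Rmult_le_compat_l k) in B2; lra. }
    assert (0 <= k ^ 2 * phase1 t ^ 2 <= k ^ 2 * 49).
    { pose proof (pow2_ge_0 k). split; [apply Rmult_le_pos | apply Rmult_le_compat_l]; lra. }
    assert (k <= k ^ 2) by (simpl; nra).
    apply Rabs_le_between in Hkp. apply Rabs_le. split; lra. }
  rewrite Rabs_Ropp, (Rabs_right k), (Rabs_right (phase1 t)) by lra.
  split; [lra | split].
  - apply Rmult_le_compat; [nra | lra | nra | lra].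
  - apply Rmult_le_compat; [apply Rabs_pos | lra | exact Hq | lra].
Qed.

Lemma amp_left c t : t <= t1 ->
  amp k c phase t = c * exp (- k * sqrt b * t) /\ wave_coef k phase1 phase2 t = b.
Proof.
  intros Ht. destruct (phase_left t Ht) as (E0 & E1 & E2).
  unfold amp, wave_coef. rewrite E0, E1, E2.
  split; [f_equal; f_equal; ring|].
  unfold Rdiv. rewrite Rmult_0_l, Rminus_0_r. apply pow2_sqrt. lra.
Qed.

Lemma amp_right c c' t : t1 + 400 <= t ->
  c * exp (- k * sqrt b * t1) = c' * exp (- k * sqrt b' * t1) ->
  amp k c phase t = c' * exp (- k * sqrt b' * t) /\ wave_coef k phase1 phase2 t = b'.
Proof.
  intros Ht Hc. destruct (phase_right t Ht) as (E0 & E1 & E2).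
  unfold amp, wave_coef. rewrite E0, E1, E2.
  split; [|unfold Rdiv; rewrite Rmult_0_l, Rminus_0_r; apply pow2_sqrt; lra].
  replace (- k * (sqrt b' * t - (sqrt b' - sqrt b) * t1))
    with (- k * sqrt b * t1 + (- k * sqrt b' * t + k * sqrt b' * t1)) by ring.
  rewrite exp_plus, <- Rmult_assoc, Hc, Rmult_assoc, <- exp_plus.
  f_equal; f_equal; ring.
Qed.

Let k_neq0 : k <> 0.
Proof. lra. Qed.

Let d_amp c := is_derive_amp k c _ _ is_derive_phase.
Let d_amp1 c := is_derive_amp1 k c _ _ _ is_derive_phase is_derive_phase1.
Let c_amp2 c := continuous_amp2 k c _ _ _ _ is_derive_phase is_derive_phase1 is_derive_phase2.

Definition transition_wave (c : R) : fun3 := sep (amp k c phase) (fun y => cos (k * y)).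
Definition transition_field (a : R) : mat2field :=
  diag_field (fun _ => a) (wave_coef k phase1 phase2).

Lemma transition_wave_C2 c : C2_3 (transition_wave c).
Proof.
  apply (C2_3_sep _ _ _ _ _ _ (d_amp c) (d_amp1 c)
    (is_derive_cos_mult k) (is_derive_opp_sin_mult k) (c_amp2 c)).
  intro y. apply (ex_derive_continuous (V := R_NormedModule)). auto_derive. exact I.
Qed.

Lemma transition_field_reg_class a : / 10 < a < 10 -> reg_class 80 10 (transition_field a).
Proof.
  intros Ha.
  apply (reg_class_diag_field _ _ _ (fun _ => 0) _ _
    (fun t => is_derive_const (V := R_NormedModule) a t)
    (is_derive_wave_coef k _ _ _ is_derive_phase1 is_derive_phase2 k_neq0)
    (continuous_const 0)
    (continuous_wave_coef1 k _ _ _ is_derive_phase1 is_derive_phase2 continuous_phase3));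
    intro t; try (destruct (wave_coef_bounds t); lra).
  rewrite Rabs_R0. lra.
Qed.

Lemma transition_wave_eq a c x y t :
  wave_op (transition_field a) (transition_wave c) x y t = 0.
Proof.
  apply (wave_op_diag_field_sep k _ _ _ _ _ (d_amp c) (d_amp1 c)).
  intro s. apply amp2_eq, k_neq0.
Qed.

Lemma amp_C2_1 c : C2_1 (amp k c phase).
Proof. exact (C2_1_intro _ _ _ (d_amp c) (d_amp1 c) (c_amp2 c)). Qed.

Lemma amp_Derive_n_bound c t alpha : 0 < c -> (alpha <= 2)%nat ->
  Rabs (Derive_n (amp k c phase) alpha t) <= 50 * c * k ^ alpha * exp (- k * sqrt b * t).
Proof.
  intros Hc Halpha.
  destruct (amp_bounds c t Hc) as (G0 & G1 & G2).
  destruct (Derive_n_second _ _ _ (d_amp c) (d_amp1 c) t) as [D1 D2].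
  assert (0 < c * exp (- k * sqrt b * t))
    by (apply Rmult_lt_0_compat; [lra | apply exp_pos]).
  destruct alpha as [|[|[|]]]; [simpl Derive_n | rewrite D1 | rewrite D2 | lia];
    simpl pow; nra.
Qed.

End Transition.

Theorem mainTheorem12 :
  exists K M : R,
  forall (k : Z) (a b b' : R),
    K <= IZR k ->
    / 10 < a < 10 -> / 10 < b < 10 -> / 10 < b' < 10 -> b <= b' ->
  forall t1 c1 c2 : R,
    0 <= t1 -> 0 < c1 -> 0 < c2 ->
    c1 * exp (- IZR k * sqrt b * t1) = c2 * exp (- IZR k * sqrt b' * t1) ->
  exists (u : R -> R -> R -> R) (A : mat2field),
    C2_3 u /\ periodic_xy u /\ periodic_mat A /\
    reg_class 80 10 A /\
    (forall x y t, wave_op A u x y t = 0) /\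
    (forall x y t, t <= t1 ->
       u x y t = c1 * (cos (IZR k * y) * exp (- IZR k * sqrt b * t)) /\
       is_diag A x y t a b) /\
    (forall x y t, t1 + 400 <= t ->
       u x y t = c2 * (cos (IZR k * y) * exp (- IZR k * sqrt b' * t)) /\
       is_diag A x y t a b') /\
    (exists g : R -> R,
       C2_1 g /\
       forall t, t1 <= t <= t1 + 400 ->
         (forall x y, u x y t = g t * cos (IZR k * y)) /\
         forall alpha : nat, (alpha <= 2)%nat ->
           Rabs (Derive_n g alpha t)
             <= M * c1 * IZR k ^ alpha * exp (- IZR k * sqrt b * t)).
Proof.
  exists 100, 50.
  intros k a b b' Hk Ha Hb Hb' Hbb' t1 c1 c2 _ Hc1 _ Hc.
  exists (transition_wave b b' t1 (IZR k) c1), (transition_field b b' t1 (IZR k) a).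
  split; [apply transition_wave_C2; assumption|].
  split; [apply periodic_xy_sep; intro y; apply cos_mult_periodic, le_IZR; simpl; lra|].
  split; [apply periodic_mat_diag_field|].
  split; [apply transition_field_reg_class; assumption|].
  split; [intros; apply transition_wave_eq; lra|].
  unfold transition_wave, transition_field, is_diag, sep.
  cbn [A11 A12 A21 A22 diag_field]. unfold sep.
  split; [|split].
  - intros x y t Ht. destruct (amp_left b b' t1 Hb (IZR k) c1 t Ht) as [E1 E2].
    rewrite E1, E2. repeat split; ring.
  - intros x y t Ht. destruct (amp_right b b' t1 Hb' (IZR k) c1 c2 t Ht Hc) as [E1 E2].
    rewrite E1, E2. repeat split; ring.
  - exists (amp (IZR k) c1 (phase b b' t1)). split; [apply amp_C2_1|].
    intros t _. split; [reflexivity|]. intros alpha Halpha.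
    apply amp_Derive_n_bound; assumption.
Qed.
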